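(* Let $r,c\in\mathbb{N}$, $n=r+c$, $N=2^n$, and $X=(X_1,X_2)$ with $X_1\subset\{0,1\}^n$ the strings ending in $0^c$ and $X_2\subset\{0,1\}^n$ the strings beginning with $0^r$. Consider two distributions on pairs $(\varphi,y)\in S_N\times\{0,1\}^r$: $\mathcal D_1$: sample $\varphi\sim S_N$ uniformly, sample $x\sim\{0,1\}^r$ uniformly, let $y=\mathsf{Sp}^{\varphi}(x)$, output $(\varphi,y)$. $\mathcal D_2$: sample $y\sim\{0,1\}^r$ uniformly, sample $\pi\sim\mathcal D_X$, output $(\varphi,y)$ with $\varphi=\mathsf{XOR}_{y\|0^c}\circ\pi$. Then $\mathcal D_1$ and $\mathcal D_2$ are identical distributions.
   Context: Permutations of $\{0,1\}^n$ are identified with $S_N$. $\mathsf{Sp}^{\varphi}(x)$ is the first $r$ bits of $\varphi(x\|0^c)$. $\mathsf{XOR}_{y\|0^c}$ is the permutation of $\{0,1\}^n$ given by $(a\|b)\mapsto (a\oplus y)\|b$ for $a\in\{0,1\}^r$, $b\in\{0,1\}^c$. For $\pi\in S_N$, $X_\pi=\{(i,j): i\in X_1,\ j\in X_2,\ \pi(i)=j\}$; the distribution $\mathcal D_X$ on $S_N$ is $\Pr_{\Pi\sim\mathcal D_X}[\Pi=\pi]=|X_\pi|/\sum_{\sigma\in S_N}|X_\sigma|$. *)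

From mathcomp Require Import all_boot all_order all_algebra all_fingroup.
Set Implicit Arguments. Unset Strict Implicit. Unset Printing Implicit Defensive.
Import GRing.Theory Num.Theory.
Local Open Scope ring_scope.

Definition bits (n : nat) := {ffun 'I_n -> bool}.

Section Sponge.
Variables r c : nat.
Notation W := (bits (r + c)).

Definition concat (a : bits r) (b : bits c) : W :=
  [ffun i => match split i with inl j => a j | inr k => b k end].

Definition zeros (m : nat) : bits m := [ffun => false].

Definition first_r (w : W) : bits r := [ffun j => w (lshift c j)].

Definition Sp (phi : {perm W}) (x : bits r) : bits r :=
  first_r (phi (concat x (zeros c))).

Definition xorf (y : bits r) (w : W) : W :=
  [ffun i => match split i with inl j => w i (+) y j | inr _ => w i end].

Lemma xorfK y : involutive (xorf y).
Proof.
move=> w; apply/ffunP=> i; rewrite !ffunE.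
by case: split => [j|k] //; rewrite addbK.
Qed.

Definition XOR (y : bits r) : {perm W} := perm (can_inj (xorfK y)).

Definition X1 : {set W} := [set w : W | [forall k : 'I_c, ~~ w (rshift r k)]].
Definition X2 : {set W} := [set w : W | [forall j : 'I_r, ~~ w (lshift c j)]].

Definition Xpi (pi : {perm W}) : {set W * W} :=
  [set p : W * W | (p.1 \in X1) && (p.2 \in X2) && (pi p.1 == p.2)].

Definition DX (pi : {perm W}) : rat :=
  #|Xpi pi|%:R / (\sum_(s : {perm W}) #|Xpi s|)%:R.

Definition unif (T : finType) (t : T) : rat := 1 / #|T|%:R.

Definition push (A B : finType) (mu : A -> rat) (f : A -> B) (b : B) : rat :=
  \sum_(a | f a == b) mu a.

Definition D1 : {perm W} * bits r -> rat :=
  push (fun a : {perm W} * bits r => unif a.1 * unif a.2)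
       (fun a => (a.1, Sp a.1 a.2)).

(* D_2 : y uniform, pi ~ D_X, output (XOR_{y||0^c} o pi, y) *)
Definition D2 : {perm W} * bits r -> rat :=
  push (fun a : bits r * {perm W} => unif a.1 * DX a.2)
       (fun a => ((a.2 * XOR a.1)%g, a.1)).

End Sponge.

From mathcomp Require Import all_boot all_order all_algebra all_fingroup.
From mathcomp Require Import ring.
Set Implicit Arguments. Unset Strict Implicit. Unset Printing Implicit Defensive.
Import GRing.Theory Num.Theory.

(* For fixed y, both distributions put mass proportional to
   #{x | Sp^phi(x) = y} on phi.  For D_2 this is because the elements of X_pi,
   pi = XOR_{y||0^c} o phi, are exactly the pairs
   (x || 0^c, phi(x || 0^c) xor (y || 0^c)) with Sp^phi(x) = y.  The
   normalising constant of D_X is |S_N|: a uniform permutation sends a given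
   point to a given point with probability 1/N, and |X_1| |X_2| = N. *)

Section PermCounting.
Variable T : finType.

Lemma card_perm_sends_le (a b b' : T) :
  #|[set s : {perm T} | s a == b]| <= #|[set s : {perm T} | s a == b']|.
Proof.
rewrite -(card_imset _ (mulIg (tperm b b'))).
apply: subset_leq_card; apply/subsetP => t /imsetP[s]; rewrite !inE => /eqP sa ->.
by rewrite permM sa tpermL.
Qed.

Lemma card_perm_sends (a b b' : T) :
  #|[set s : {perm T} | s a == b]| = #|[set s : {perm T} | s a == b']|.
Proof. by apply/eqP; rewrite eqn_leq !card_perm_sends_le. Qed.

Lemma card_perm_sendsM (a b : T) :
  #|T| * #|[set s : {perm T} | s a == b]| = #|{perm T}|.
Proof.
rewrite -[#|{perm T}|]sum1_card (partition_big (fun s : {perm T} => s a) predT) //=.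
rewrite -sum_nat_const; apply: eq_bigr => b' _.
by rewrite (card_perm_sends a b b') -sum1_card; apply: eq_bigl => s; rewrite inE.
Qed.

(* Double counting the triples (s, p) with p in A x B and s p.1 = p.2. *)
Lemma sum_card_perm_graph (A B : {set T}) :
  #|T| * (\sum_(s : {perm T})
     #|[set p : T * T | (p.1 \in A) && (p.2 \in B) && (s p.1 == p.2)]|)
  = #|A| * #|B| * #|{perm T}|.
Proof.
have graphE (s : {perm T}) : #|[set p : T * T | (p.1 \in A) && (p.2 \in B) && (s p.1 == p.2)]|
    = \sum_(p in setX A B) (s p.1 == p.2 : nat).
  rewrite -sum1_card (eq_bigl (fun p => (p \in setX A B) && (s p.1 == p.2))).
    by rewrite big_mkcondr; apply: eq_bigr => p _; case: eqP.
  by move=> p; rewrite !inE.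
under eq_bigr => s _ do rewrite graphE.
rewrite exchange_big big_distrr /= -cardsX -sum_nat_const.
apply: eq_bigr => p _; rewrite -(card_perm_sendsM p.1 p.2); congr (_ * _).
by rewrite -sum1_card [RHS]big_mkcond /=; apply: eq_bigr => s _; rewrite inE; case: eqP.
Qed.

End PermCounting.

Section Sponge.
Variables r c : nat.
Notation W := (bits (r + c)).

Lemma card_bits m : #|bits m| = 2 ^ m.
Proof. by rewrite card_ffun card_bool card_ord. Qed.

Lemma concat_lshift (a : bits r) (b : bits c) j : concat a b (lshift c j) = a j.
Proof. by rewrite ffunE (unsplitK (inl j)). Qed.

Lemma concat_rshift (a : bits r) (b : bits c) k : concat a b (rshift r k) = b k.
Proof. by rewrite ffunE (unsplitK (inr k)). Qed.

Lemma concat_zeros_inj : injective (fun a : bits r => concat a (zeros c)).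
Proof.
by move=> a a' /ffunP eq_aa'; apply/ffunP => j; rewrite -!(concat_lshift _ (zeros c)).
Qed.

Lemma zeros_concat_inj : injective (fun b : bits c => concat (zeros r) b).
Proof.
by move=> b b' /ffunP eq_bb'; apply/ffunP => k; rewrite -!(concat_rshift (zeros r)).
Qed.

Lemma bits_split_eq (w w' : W) :
  (forall j, w (lshift c j) = w' (lshift c j)) ->
  (forall k, w (rshift r k) = w' (rshift r k)) -> w = w'.
Proof.
by move=> eql eqr; apply/ffunP => i; rewrite -[i]splitK; case: (split i).
Qed.

Lemma X1E : X1 r c = [set concat a (zeros c) | a : bits r].
Proof.
apply/setP => w; rewrite inE; apply/forallP/imsetP => [w0|[a _ ->] k].
  exists (first_r w) => //; apply: bits_split_eq => [j|k].
    by rewrite concat_lshift ffunE.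
  by rewrite concat_rshift ffunE; apply/negbTE.
by rewrite concat_rshift ffunE.
Qed.

Lemma X2E : X2 r c = [set concat (zeros r) b | b : bits c].
Proof.
apply/setP => w; rewrite inE; apply/forallP/imsetP => [w0|[b _ ->] j].
  exists [ffun k => w (rshift r k)] => //; apply: bits_split_eq => [j|k].
    by rewrite concat_lshift ffunE; apply/negbTE.
  by rewrite concat_rshift ffunE.
by rewrite concat_lshift ffunE.
Qed.

Lemma card_X1_X2 : #|X1 r c| * #|X2 r c| = #|W|.
Proof.
rewrite X1E X2E !card_imset; [|exact: zeros_concat_inj|exact: concat_zeros_inj].
by rewrite !card_bits expnD.
Qed.

Lemma sum_card_Xpi : \sum_(s : {perm W}) #|Xpi s| = #|{perm W}|.
Proof.
apply/eqP; rewrite -(eqn_pmul2l (_ : 0 < #|W|)); last by rewrite card_bits expn_gt0.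
by rewrite sum_card_perm_graph card_X1_X2.
Qed.

Lemma XORV (y : bits r) : (XOR c y)^-1%g = XOR c y.
Proof.
apply: (mulgI (XOR c y)); rewrite mulgV; apply/permP => w.
by rewrite permM !permE /= xorfK.
Qed.

Lemma xorf_in_X2 (y : bits r) (w : W) : (xorf y w \in X2 r c) = (first_r w == y).
Proof.
rewrite inE; apply/forallP/eqP => [w0|<- j].
  apply/ffunP => j; rewrite ffunE; move: (w0 j).
  by rewrite ffunE (unsplitK (inl j)); case: (w _); case: (y j).
by rewrite ffunE (unsplitK (inl j)) ffunE addbb.
Qed.

Lemma card_Xpi_XOR (phi : {perm W}) (y : bits r) :
  #|Xpi (phi * XOR c y)%g| = #|[set x : bits r | Sp phi x == y]|.
Proof.
pose graph x := (concat x (zeros c), (phi * XOR c y)%g (concat x (zeros c))).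
have graph_inj : injective graph by move=> x x' [] /concat_zeros_inj.
rewrite -(card_imset _ graph_inj); apply: eq_card => -[w w'].
rewrite inE /= X1E permM [XOR c y _]permE; apply/idP/imsetP.
  case/andP => /andP[/imsetP[x _ ->] w'X2] /eqP w'E.
  exists x; first by rewrite inE /Sp -xorf_in_X2 w'E.
  by rewrite /graph permM [XOR c y _]permE w'E.
case=> x; rewrite inE => Spx [-> ->].
rewrite permM [XOR c y _]permE xorf_in_X2 eqxx Spx !andbT.
by apply/imsetP; exists x.
Qed.

Lemma card_Sp_fibre (phi : {perm W}) (y : bits r) :
  #|[pred a : {perm W} * bits r | (a.1, Sp a.1 a.2) == (phi, y)]|
  = #|[set x : bits r | Sp phi x == y]|.
Proof.
have pair_inj : injective (pair phi : bits r -> {perm W} * bits r) by move=> x x' [].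
rewrite -(card_imset _ pair_inj); apply: eq_card => -[s x]; rewrite !inE /= xpair_eqE.
apply/andP/imsetP => [[/eqP -> Spx]|[x']]; first by exists x; rewrite ?inE.
by rewrite inE => Spx' [-> ->].
Qed.

Lemma XOR_preimage (phi : {perm W}) (y : bits r) (a : bits r * {perm W}) :
  (((a.2 * XOR c a.1)%g, a.1) == (phi, y)) = (a == (y, (phi * XOR c y)%g)).
Proof.
case: a => y' s; rewrite !xpair_eqE andbC /=.
by case: (y' =P y) => //= ->; rewrite -{1}XORV divg_eq.
Qed.

End Sponge.

Theorem lemma5 (r c : nat) :
  forall z : {perm bits (r + c)} * bits r, D1 z = D2 z.
Proof.
move=> [phi y].
rewrite /D1 /D2 /push /unif sumr_const card_Sp_fibre.
rewrite (big_pred1 (y, (phi * XOR c y)%g)) => [|a]; last exact: XOR_preimage.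
rewrite /DX card_Xpi_XOR sum_card_Xpi -mulr_natr; ring.
Qed.
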